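(* Let $q\ge 2$, $t\ge 2$ and $s\ge 1$ be integers. Then (2) $K_{q}^{RT}((t-1)q,s,(t-1)qs-t)\le K_{q}((t-1)q,(t-1)q-t)$; (3) $K_{q}^{RT}((t-1)q,s,(t-1)qs-t)\le q-2+CAN(t,(t-1)q,2)$.
   Context: For positive integers $m,s$, the RT poset $[m\times s]$ is the set $\{1,\ldots,ms\}$ partitioned into $m$ blocks $B_i=\{is+1,\ldots,(i+1)s\}$; each block is a chain under the usual order of the integers, and elements of different blocks are incomparable. An ideal is a subset $I$ such that $b\in I$ and $a\preceq b$ imply $a\in I$; $\langle A\rangle$ denotes the smallest ideal containing $A$. For $x,y\in\mathbb{Z}_q^{ms}$, the RT distance is $d_{RT}(x,y)=|\langle\{i:x_i\neq y_i\}\rangle|$. A code $C\subseteq \mathbb{Z}_q^{ms}$ is an $R$-covering if for every $x\in\mathbb{Z}_q^{ms}$ there is $c\in C$ with $d_{RT}(x,c)\le R$; $K_q^{RT}(m,s,R)$ is the smallest size of an $R$-covering. $K_q(n,R)=K_q^{RT}(n,1,R)$ is the classical Hamming covering number. A covering array $CA(N;t,n,v)$ ($2\le t\le n$) is an $N\times n$ array over an alphabet of size $v$ in which, for every set of $t$ columns, every $t$-tuple over the alphabet appears as a row of the corresponding $N\times t$ subarray; $CAN(t,n,v)$ is the least such $N$. *)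

From mathcomp Require Import all_boot.
Set Implicit Arguments. Unset Strict Implicit. Unset Printing Implicit Defensive.

(* Coordinates of Z_q^{ms} are indexed 0-based by 'I_(m*s); the alphabet
   Z_q is represented by 'I_q (only equality of symbols matters). *)
Definition word (q m s : nat) := {ffun 'I_(m * s) -> 'I_q}.

(* RT order: a, b comparable iff in the same block (a %/ s = b %/ s),
   and then ordered as integers. Block i = {i*s, ..., i*s + s - 1}. *)
Definition rt_le (s : nat) (a b : nat) : bool := (a %/ s == b %/ s) && (a <= b).

Definition rt_ideal (m s : nat) (A : {set 'I_(m * s)}) : {set 'I_(m * s)} :=
  [set a : 'I_(m * s) | [exists b in A, rt_le s a b]].

Definition supp (q m s : nat) (x y : word q m s) : {set 'I_(m * s)} :=
  [set i | x i != y i].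

Definition dRT (q m s : nat) (x y : word q m s) : nat := #|rt_ideal (supp x y)|.

Definition is_covering (q m s R : nat) (C : {set word q m s}) : bool :=
  [forall x : word q m s, [exists c in C, dRT x c <= R]].

Definition has_covering_of_size (q m s R : nat) : pred nat :=
  fun N => [exists C : {set word q m s}, (#|C| == N) && is_covering R C].

Lemma has_covering_ex (q m s R : nat) : exists N, has_covering_of_size q m s R N.
Proof.
exists #|[set: word q m s]|; apply/existsP; exists [set: word q m s].
rewrite eqxx /=; apply/forallP => x; apply/existsP; exists x.
rewrite in_setT /= /dRT /supp.
have -> : [set i | x i != x i] = set0 by apply/setP => i; rewrite !inE eqxx.
have -> : rt_ideal (m:=m) (s:=s) set0 = set0.
  by apply/setP => a; rewrite !inE; apply/existsP => -[b]; rewrite inE.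
by rewrite cards0.
Qed.

Definition K_RT (q m s R : nat) : nat := ex_minn (has_covering_ex q m s R).

Definition K_H (q n R : nat) : nat := K_RT q n 1 R.

(* covering array CA(N; t, n, v): rows A r, r < N, each a word of length n
   over an alphabet of size v; every t-tuple on every t-set of columns T
   appears (a t-tuple on T is given as a function f agreeing on T). *)
Definition is_covering_array (N t n v : nat)
    (A : {ffun 'I_N -> {ffun 'I_n -> 'I_v}}) : bool :=
  [forall T : {set 'I_n}, (#|T| == t) ==>
     [forall f : {ffun 'I_n -> 'I_v}, [exists r : 'I_N, [forall j in T, A r j == f j]]]].

Definition has_CA (t n v : nat) : pred nat :=
  fun N => [exists A : {ffun 'I_N -> {ffun 'I_n -> 'I_v}}, is_covering_array t A].

Lemma has_CA_ex (t n v : nat) : exists N, has_CA t n v N.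
Proof.
exists #|{ffun 'I_n -> 'I_v}|; apply/existsP.
exists [ffun r => enum_val r]; apply/forallP => T; apply/implyP => _.
apply/forallP => f; apply/existsP; exists (enum_rank f).
by apply/forallP => j; apply/implyP => _; rewrite ffunE enum_rankK.
Qed.

Definition CAN (t n v : nat) : nat := ex_minn (has_CA_ex t n v).

(* Inflate a code of length n to length n*s by making each word constant on
   the blocks. The last element of a block lies below no other element, so if
   x, sampled at the last element of each block, agrees with a codeword c in t
   blocks, then those t last elements avoid the ideal generated by the support
   of x - inflate c, and d_RT(x, inflate c) <= ns - t. Hence every code in
   which each word agrees with some codeword in at least t coordinates yields
   an (ns - t)-covering of the same size. Hamming (n - t)-coverings are such
   codes (part 2), and so is the union of the q - 2 constant words on the low
   symbols with the rows of a binary covering array of strength t written in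
   the two high symbols (part 3): by pigeonhole, a word containing each low
   symbol fewer than t times has at least n - (q - 2)(t - 1) >= t high
   coordinates, and some row matches it on t of them. *)

From mathcomp Require Import all_boot zify.
Set Implicit Arguments. Unset Strict Implicit. Unset Printing Implicit Defensive.

Lemma K_RT_min (q m s R : nat) (C : {set word q m s}) :
  is_covering R C -> K_RT q m s R <= #|C|.
Proof.
move=> covC; rewrite /K_RT; case: ex_minnP => N _; apply.
by apply/existsP; exists C; rewrite eqxx.
Qed.

Lemma K_RT_spec (q m s R : nat) :
  exists2 C : {set word q m s}, #|C| = K_RT q m s R & is_covering R C.
Proof.
rewrite /K_RT; case: ex_minnP => N /existsP [C /andP [/eqP cardC covC]] _.
by exists C.
Qed.

Lemma CAN_spec (t n v : nat) :
  exists A : {ffun 'I_(CAN t n v) -> {ffun 'I_n -> 'I_v}}, is_covering_array t A.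
Proof. by rewrite /CAN; case: ex_minnP => N /existsP. Qed.

Lemma sub_rt_ideal (m s : nat) (A : {set 'I_(m * s)}) : A \subset rt_ideal A.
Proof.
by apply/subsetP => a aA; rewrite inE; apply/existsP; exists a; rewrite aA /rt_le !eqxx leqnn.
Qed.

Lemma card_supp_le_dRT (q m s : nat) (x y : word q m s) : #|supp x y| <= dRT x y.
Proof. exact/subset_leq_card/sub_rt_ideal. Qed.

Lemma exists_subset_card (T : finType) (A : {set T}) (k : nat) :
  k <= #|A| -> exists2 B : {set T}, B \subset A & #|B| = k.
Proof.
case/card_geqP => e [uniq_e size_e sub_e]; exists [set x in e].
  by apply/subsetP => x; rewrite inE => /sub_e.
by rewrite cardsE (card_uniqP uniq_e).
Qed.

Section Blocks.

Variables (n s : nat).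
Hypothesis s_gt0 : 0 < s.

Lemma block_subproof (k : 'I_(n * s)) : k %/ s < n.
Proof. by rewrite ltn_divLR. Qed.

Definition block (k : 'I_(n * s)) : 'I_n := Ordinal (block_subproof k).

Lemma block_last_subproof (i : 'I_n) : i * s + s.-1 < n * s.
Proof.
have : i.+1 * s <= n * s by rewrite leq_mul2r ltn_ord orbT.
by rewrite mulSn -(prednK s_gt0) addSn addnC.
Qed.

Definition block_last (i : 'I_n) : 'I_(n * s) := Ordinal (block_last_subproof i).

Lemma block_lastK : cancel block_last block.
Proof.
by move=> i; apply: val_inj; rewrite /= divnMDl // divn_small ?addn0 ?prednK.
Qed.

Lemma block_last_inj : injective block_last.
Proof. exact: can_inj block_lastK. Qed.

(* The last element of a block is maximal in the RT order. *)
Lemma rt_ideal_block_last (A : {set 'I_(n * s)}) (i : 'I_n) :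
  (block_last i \in rt_ideal A) = (block_last i \in A).
Proof.
apply/idP/idP => [|/(subsetP (sub_rt_ideal A))//].
rewrite inE => /existsP [b /andP [bA /andP [/eqP same_block le_b]]].
suff -> : block_last i = b by [].
apply/val_inj/eqP; rewrite eqn_leq le_b /=.
have := divn_eq b s; have := ltn_pmod b s_gt0.
have -> : b %/ s = i by rewrite -same_block -[RHS](congr1 val (block_lastK i)).
lia.
Qed.

End Blocks.

Definition agreement (I : finType) (q : nat) (c y : {ffun I -> 'I_q}) : {set I} :=
  [set i | c i == y i].

(* For words of length n, this is a Hamming covering of radius n - t. *)
Definition agreeing_code (I : finType) (q t : nat) (W : {set {ffun I -> 'I_q}}) : Prop :=
  forall y, exists2 c, c \in W & t <= #|agreement c y|.

Section Inflation.

Variables (q n s : nat).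
Hypothesis s_gt0 : 0 < s.

Local Notation block := (block s_gt0).
Local Notation block_last := (block_last s_gt0).

Definition inflate (c : {ffun 'I_n -> 'I_q}) : word q n s := [ffun k => c (block k)].

Definition sample (x : word q n s) : {ffun 'I_n -> 'I_q} := [ffun i => x (block_last i)].

Lemma rt_ideal_supp_inflate (x : word q n s) (c : {ffun 'I_n -> 'I_q}) :
  rt_ideal (supp x (inflate c)) \subset ~: (block_last @: agreement c (sample x)).
Proof.
apply/subsetP => a a_ideal; rewrite in_setC; apply/imsetP => -[i].
rewrite inE ffunE => /eqP c_x a_last; move: a_ideal.
by rewrite a_last rt_ideal_block_last inE ffunE block_lastK c_x eqxx.
Qed.

Lemma dRT_inflate (x : word q n s) (c : {ffun 'I_n -> 'I_q}) :
  dRT x (inflate c) <= n * s - #|agreement c (sample x)|.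
Proof.
apply: leq_trans (subset_leq_card (rt_ideal_supp_inflate x c)) _.
by rewrite [#|~: _|]cardsCs setCK card_imset ?card_ord //; apply: block_last_inj.
Qed.

Lemma K_RT_le_agreeing (t : nat) (W : {set {ffun 'I_n -> 'I_q}}) :
  agreeing_code t W -> K_RT q n s (n * s - t) <= #|W|.
Proof.
move=> agreeW; apply: leq_trans (leq_imset_card inflate W).
apply: K_RT_min; apply/forallP => x; have [c cW agree_c] := agreeW (sample x).
apply/existsP; exists (inflate c); rewrite imset_f //=.
exact: leq_trans (dRT_inflate x c) (leq_sub2l _ agree_c).
Qed.

End Inflation.

Section HammingCovering.

Variables (q n : nat).

Local Notation block1 := (@block n 1 (ltn0Sn 0)).
Local Notation inflate1 := (@inflate q n 1 (ltn0Sn 0)).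
Local Notation sample1 := (@sample q n 1 (ltn0Sn 0)).

Lemma block1K : cancel block1 (block_last (ltn0Sn 0)).
Proof. by move=> k; apply: val_inj; rewrite /= divn1 muln1 addn0. Qed.

Lemma hamming_covering_agreeing (t : nat) (C : {set word q n 1}) :
  t <= n -> is_covering (n - t) C -> agreeing_code t (sample1 @: C).
Proof.
move=> le_t_n /forallP covC y.
have /existsP [c /andP [cC near_c]] := covC (inflate1 y).
exists (sample1 c); first exact: imset_f.
have agree_off_supp : block1 @: (~: supp (inflate1 y) c) \subset agreement (sample1 c) y.
  apply/subsetP => _ /imsetP [k + ->]; rewrite !inE negbK ffunE => /eqP y_c.
  by rewrite ffunE block1K y_c.
apply: leq_trans (subset_leq_card agree_off_supp).
rewrite card_imset; last exact: can_inj block1K.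
rewrite [#|~: _|]cardsCs setCK card_ord.
apply: leq_trans (leq_sub2l _ (leq_trans (card_supp_le_dRT _ _) near_c)).
by rewrite muln1 subKn.
Qed.

End HammingCovering.

Theorem K_RT_le_K_H (q n s t : nat) : 0 < s -> t <= n ->
  K_RT q n s (n * s - t) <= K_H q n (n - t).
Proof.
move=> s_gt0 le_t_n; rewrite /K_H; have [C <- covC] := K_RT_spec q n 1 (n - t).
apply: leq_trans (K_RT_le_agreeing s_gt0 (hamming_covering_agreeing le_t_n covC)) _.
exact: leq_imset_card.
Qed.

Lemma card_values_lt (I : finType) (f : I -> nat) (Q c : nat) :
  (forall k, k < Q -> #|[set i | f i == k]| <= c) -> #|[set i | f i < Q]| <= Q * c.
Proof.
elim: Q => [|Q IH] fibre_le.
  by rewrite (_ : [set i | f i < 0] = set0) ?cards0 //; apply/setP => i; rewrite !inE.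
have -> : [set i | f i < Q.+1] = [set i | f i < Q] :|: [set i | f i == Q].
  by apply/setP => i; rewrite !inE ltnS leq_eqVlt orbC.
rewrite mulSn addnC; apply: leq_trans (leq_card_setU _ _) (leq_add _ _).
  exact: IH (fun k lt_k => fibre_le k (ltnW lt_k)).
exact: fibre_le.
Qed.

Section CoveringArrayCode.

(* The alphabet 'I_r.+2 consists of r low symbols and the two high symbols r, r + 1. *)
Variables (r n t : nat).

Definition low (k : 'I_r) : 'I_r.+2 := widen_ord (leqW (leqnSn r)) k.

Definition high (b : 'I_2) : 'I_r.+2 := inord (r + b).

Lemma val_high (b : 'I_2) : high b = r + b :> nat.
Proof. by rewrite inordK //; have := ltn_ord b; lia. Qed.

Definition lift_row (u : {ffun 'I_n -> 'I_2}) : {ffun 'I_n -> 'I_r.+2} :=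
  [ffun j => high (u j)].

Definition ca_code (N : nat) (A : {ffun 'I_N -> {ffun 'I_n -> 'I_2}}) :
    {set {ffun 'I_n -> 'I_r.+2}} :=
  [set [ffun=> low k] | k : 'I_r] :|: [set lift_row (A i) | i : 'I_N].

Lemma card_ca_code (N : nat) (A : {ffun 'I_N -> {ffun 'I_n -> 'I_2}}) :
  #|ca_code A| <= r + N.
Proof.
apply: leq_trans (leq_card_setU _ _) (leq_add _ _).
  by rewrite -[leqRHS]card_ord leq_imset_card.
by rewrite -[leqRHS]card_ord leq_imset_card.
Qed.

Lemma many_high_coordinates (y : {ffun 'I_n -> 'I_r.+2}) :
  r * t.-1 + t <= n -> (forall k, #|[set j | low k == y j]| < t) ->
  t <= #|[set j | r <= y j]|.
Proof.
move=> n_large few_low.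
have : #|[set j | y j < r]| <= r * t.-1.
  apply: card_values_lt => k lt_k; have := few_low (Ordinal lt_k).
  rewrite (_ : [set j | _ == y j] = [set j | (y j : nat) == k]); first lia.
  by apply/setP => j; rewrite !inE eq_sym.
have -> : [set j | y j < r] = ~: [set j | r <= y j].
  by apply/setP => j; rewrite !inE -ltnNge.
have := cardsC [set j | r <= y j]; rewrite card_ord; lia.
Qed.

Lemma lift_row_agreement (u : {ffun 'I_n -> 'I_2}) (y : {ffun 'I_n -> 'I_r.+2})
    (T : {set 'I_n}) :
  T \subset [set j | r <= y j] -> {in T, forall j, u j = inord (y j - r)} ->
  T \subset agreement (lift_row u) y.
Proof.
move=> /subsetP T_high u_y; apply/subsetP => j jT.
have := T_high j jT; rewrite !inE ffunE u_y // => le_r_y.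
by apply/eqP/val_inj; rewrite /= val_high inordK; have := ltn_ord (y j); lia.
Qed.

Lemma ca_code_agreeing (N : nat) (A : {ffun 'I_N -> {ffun 'I_n -> 'I_2}}) :
  is_covering_array t A -> r * t.-1 + t <= n -> agreeing_code t (ca_code A).
Proof.
move=> /forallP CA n_large y.
have [/existsP [k many_k] | /existsPn few_low] :=
  boolP [exists k : 'I_r, t <= #|[set j | low k == y j]|].
  exists [ffun=> low k]; first by rewrite inE imset_f.
  by apply: leq_trans many_k (subset_leq_card _); apply/subsetP => j; rewrite !inE ffunE.
have [T T_high card_T] : exists2 T : {set 'I_n}, T \subset [set j | r <= y j] & #|T| = t.
  apply/exists_subset_card/many_high_coordinates => // k.
  by rewrite ltnNge few_low.
have /implyP := CA T; rewrite card_T eqxx => /(_ isT) /forallP.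
move=> /(_ [ffun j => inord (y j - r)]) /existsP [i A_i].
exists (lift_row (A i)); first by rewrite inE; apply/orP; right; apply/imsetP; exists i.
rewrite -card_T; apply/subset_leq_card/lift_row_agreement => // j jT.
by have /forallP /(_ j) /implyP /(_ jT) /eqP -> := A_i; rewrite ffunE.
Qed.

End CoveringArrayCode.

Theorem K_RT_le_CAN (q n s t : nat) : 2 <= q -> 0 < s -> (q - 2) * t.-1 + t <= n ->
  K_RT q n s (n * s - t) <= q - 2 + CAN t n 2.
Proof.
case: q => [|[|r]] // _ s_gt0; rewrite subn2 /= => n_large.
have [A CA_A] := CAN_spec t n 2.
apply: leq_trans (K_RT_le_agreeing s_gt0 (ca_code_agreeing CA_A n_large)) _.
exact: card_ca_code.
Qed.

Theorem theorem2 (q t s : nat) (hq : 2 <= q) (ht : 2 <= t) (hs : 1 <= s) :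
  K_RT q ((t - 1) * q) s ((t - 1) * q * s - t)
    <= K_H q ((t - 1) * q) ((t - 1) * q - t)
  /\
  K_RT q ((t - 1) * q) s ((t - 1) * q * s - t)
    <= q - 2 + CAN t ((t - 1) * q) 2.
Proof.
have n_large : (q - 2) * t.-1 + t <= (t - 1) * q by nia.
split; first by apply: K_RT_le_K_H => //; nia.
exact: K_RT_le_CAN.
Qed.
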